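(* Let $T$ be a spanning tree and $\tau=\sum_{(i,j)\in T}\frac{r(i,j)}{R(C(i,j))}$. For any probability distribution over $\mathbf x\in\mathbb R^V$ such that $\mathbb E_{\mathbf x}[\mathcal B(\mathbf x)]\ge(1-\frac\epsilon\tau)\mathcal B(\mathbf x^* )$, we have $\mathbb E_{\mathbf x}[\mathcal E(\mathbf f_{T,\mathbf x})]\le(1+\epsilon)\mathcal E(\mathbf f^* )$.
   Context: $G=(V,E)$ is a connected undirected graph with resistances $r(e)>0$ and fixed orientation $\vec E$; $\mathbf b\in\mathbb R^V$ with $\sum_ib(i)=0$; a $\mathbf b$-flow has net outflow $b(i)$ at every $i$ (with $f(j,i)=-f(i,j)$). $\mathcal E(\mathbf f)=\frac12\sum_er(e)f(e)^2$, $\mathbf f^*$ is the minimum-energy $\mathbf b$-flow; $\mathbf L=\sum_{ij\in E}\frac1{r(i,j)}(\mathbf e_i-\mathbf e_j)(\mathbf e_i-\mathbf e_j)^\top$, $\mathcal B(\mathbf x)=\mathbf b^\top\mathbf x-\frac12\mathbf x^\top\mathbf L\mathbf x$, and $\mathbf x^*$ maximizes $\mathcal B$. $T$ is rooted with edges directed toward the root; $C(i,j)$ is the vertex set of the component of $T-ij$ containing $i$; $R(C)=(\sum_{e\in\delta(C)}1/r(e))^{-1}$ where $\delta(C)$ is the set of edges with exactly one endpoint in $C$. The tree-defined flow $\mathbf f_{T,\mathbf x}$ equals $\frac{x(i)-x(j)}{r(i,j)}$ on non-tree edges and on tree edges takes the unique values making it a $\mathbf b$-flow. *)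

From HB Require Import structures.
From mathcomp Require Import all_boot all_order all_algebra.
From mathcomp Require Import all_classical all_reals all_analysis.
Set Implicit Arguments. Unset Strict Implicit. Unset Printing Implicit Defensive.
Import Order.TTheory GRing.Theory Num.Theory.
Local Open Scope ring_scope.

(* Graph: vertex set 'I_n, finite edge type E, each edge e oriented from
   tl e to hd e (the fixed orientation), resistances r : E -> R. *)
Section Graph.
Variables (R : realType) (n : nat) (E : finType) (tl hd : E -> 'I_n).

Definition adjS (S : {set E}) : rel 'I_n :=
  fun u v => [exists e in S, ((tl e == u) && (hd e == v)) || ((tl e == v) && (hd e == u))].

Definition connected_graph : Prop := forall u v, connect (adjS [set: E]) u v.

(* T is a spanning tree: connected on all vertices, and acyclic
   (every tree edge is a bridge of T). *)
Definition spanning_tree (T : {set E}) : Prop :=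
  (forall u v, connect (adjS T) u v) /\
  (forall e, e \in T -> ~~ connect (adjS (T :\ e)) (tl e) (hd e)).

Definition compC (T : {set E}) (e : E) : {set 'I_n} :=
  [set v | connect (adjS (T :\ e)) (tl e) v].

Definition cut (C : {set 'I_n}) : {set E} :=
  [set e | (tl e \in C) != (hd e \in C)].

Definition effR (r : E -> R) (C : {set 'I_n}) : R :=
  (\sum_(e in cut C) (r e)^-1)^-1.

Definition tau (r : E -> R) (T : {set E}) : R :=
  \sum_(e in T) r e / effR r (compC T e).

Definition is_bflow (b : 'cV[R]_n) (f : E -> R) : Prop :=
  forall v : 'I_n,
    \sum_(e | tl e == v) f e - \sum_(e | hd e == v) f e = b v 0.

Definition energy (r : E -> R) (f : E -> R) : R :=
  2^-1 * \sum_e r e * f e ^+ 2.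

Definition lap (r : E -> R) : 'M[R]_n :=
  \sum_e (r e)^-1 *:
     ((delta_mx (tl e) (0 : 'I_1) - delta_mx (hd e) 0) *m
      (delta_mx (tl e) (0 : 'I_1) - delta_mx (hd e) 0)^T).

Definition Bfun (r : E -> R) (b x : 'cV[R]_n) : R :=
  (b^T *m x) 0 0 - 2^-1 * (x^T *m lap r *m x) 0 0.

Definition is_tree_flow (r : E -> R) (b : 'cV[R]_n) (T : {set E})
    (x : 'cV[R]_n) (f : E -> R) : Prop :=
  is_bflow b f /\ forall e, e \notin T -> f e = (x (tl e) 0 - x (hd e) 0) / r e.

End Graph.

(* For every b-flow f, B(x) = E(f) - 1/2 sum_e r(e) g(e)^2, where
   g(e) = f(e) - (x(i) - x(j))/r(e) is the deviation from Ohm's law; hence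
   B <= E, and min E = max B =: B* because the tree flow at a maximizer of B
   attains it.  The tree flow f_{T,x} deviates only on tree edges.  Raising x
   by a on the component C(e) of a tree edge e changes B(x) by
   a g(e) - a^2 / (2 R(C(e))), because e is the only tree edge leaving C(e);
   maximality of B* then gives r(e) g(e)^2 / 2 <= r(e) / R(C(e)) (B* - B(x)).
   Summing over T, E(f_{T,x}) <= B(x) + tau (B* - B(x)), and taking
   expectations with tau >= 1 yields the bound. *)

From HB Require Import structures.
From mathcomp Require Import all_boot all_order all_algebra.
From mathcomp Require Import all_classical all_reals all_analysis measurable_realfun.
From mathcomp Require Import ring lra.
Import Order.TTheory GRing.Theory Num.Theory.
Local Open Scope ring_scope.
Set Implicit Arguments. Unset Strict Implicit. Unset Printing Implicit Defensive.

Lemma sqr_le_quadratic_ub (R : realFieldType) (A S D : R) : 0 < S ->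
  (forall a, a * A - 2^-1 * a ^+ 2 * S <= D) -> A ^+ 2 <= 2 * S * D.
Proof.
move=> S_gt0 ub; have := ub (A / S).
have -> : A / S * A - 2^-1 * (A / S) ^+ 2 * S = (2 * S)^-1 * A ^+ 2.
  by field; rewrite gt_eqF.
by rewrite ler_pdivrMl ?mulr_gt0.
Qed.

Section Duality.
Variables (R : realType) (n : nat) (E : finType) (tl hd : E -> 'I_n).
Variables (r : E -> R) (b : 'cV[R]_n).
Hypothesis r_gt0 : forall e, 0 < r e.

(* discharges the side conditions left by [field] *)
Let r_neq0 e : r e != 0. Proof. by rewrite gt_eqF. Qed.

Definition potdiff (x : 'cV[R]_n) e := x (tl e) 0 - x (hd e) 0.

Definition ohm_gap (f : E -> R) (x : 'cV[R]_n) e := f e - potdiff x e / r e.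

Lemma lap_quadE x : (x^T *m lap tl hd r *m x) 0 0 = \sum_e potdiff x e ^+ 2 / r e.
Proof.
rewrite /lap mulmx_sumr mulmx_suml summxE; apply: eq_bigr => e _.
rewrite -scalemxAr -scalemxAl mxE mulmxA -mulmxA.
set v := (delta_mx (tl e) 0 - delta_mx (hd e) 0 : 'cV[R]_n).
have xv : x^T *m v = (potdiff x e)%:M.
  by apply/matrixP => i j; rewrite !ord1 /v mulmxBr -!colE !mxE.
have vx : v^T *m x = (potdiff x e)%:M.
  by rewrite -[x]trmxK -trmx_mul xv trmxK tr_scalar_mx.
by rewrite !mulmxA xv -mulmxA vx mul_scalar_mx !mxE /= mulr1n mulrC expr2.
Qed.

Lemma bflow_dotE f x : is_bflow tl hd b f -> (b^T *m x) 0 0 = \sum_e f e * potdiff x e.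
Proof.
move=> f_flow; rewrite mxE.
under eq_bigr => v _ do rewrite mxE -f_flow mulrBl !mulr_suml.
have endpointE (h : E -> 'I_n) :
    \sum_v \sum_(e | h e == v) f e * x v 0 = \sum_e f e * x (h e) 0.
  rewrite (exchange_big_dep predT) //=; apply: eq_bigr => e _.
  by rewrite (big_pred1 (h e)) // => v; rewrite eq_sym.
by rewrite sumrB !endpointE -sumrB; apply: eq_bigr => e _; rewrite mulrBr.
Qed.

Lemma BfunE x : Bfun tl hd r b x =
  \sum_v b v 0 * x v 0 - 2^-1 * \sum_e potdiff x e ^+ 2 / r e.
Proof.
by rewrite /Bfun lap_quadE mxE; congr (_ - _); apply: eq_bigr => v _; rewrite mxE.
Qed.

Lemma Bfun_gapE f x : is_bflow tl hd b f ->
  Bfun tl hd r b x = energy r f - 2^-1 * \sum_e r e * ohm_gap f x e ^+ 2.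
Proof.
move=> f_flow; rewrite /Bfun lap_quadE (bflow_dotE x f_flow) /energy.
have -> : \sum_e r e * ohm_gap f x e ^+ 2 = \sum_e r e * f e ^+ 2
    - 2 * \sum_e f e * potdiff x e + \sum_e potdiff x e ^+ 2 / r e.
  rewrite mulr_sumr -sumrB -big_split /=; apply: eq_bigr => e _.
  by rewrite /ohm_gap; field.
by field.
Qed.

Lemma energy_ge0 f : 0 <= energy r f.
Proof.
rewrite /energy mulr_ge0 ?invr_ge0 ?ler0n // sumr_ge0 // => e _.
by rewrite mulr_ge0 ?sqr_ge0 ?ltW.
Qed.

Lemma Bfun_le_energy f x : is_bflow tl hd b f -> Bfun tl hd r b x <= energy r f.
Proof.
move=> f_flow; rewrite (Bfun_gapE x f_flow) lerBlDr lerDl mulr_ge0 ?invr_ge0 //.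
by rewrite sumr_ge0 // => e _; rewrite mulr_ge0 ?sqr_ge0 ?ltW.
Qed.

Definition cut_sign (C : {set 'I_n}) e : R := (tl e \in C)%:R - (hd e \in C)%:R.

Definition indic_col (C : {set 'I_n}) : 'cV[R]_n := \col_i (i \in C)%:R.

Lemma potdiff_shift x (C : {set 'I_n}) a e :
  potdiff (x + a *: indic_col C) e = potdiff x e + a * cut_sign C e.
Proof. by rewrite /potdiff /cut_sign /indic_col !mxE; ring. Qed.

Lemma sum_cut_sign_sqr (C : {set 'I_n}) :
  \sum_e cut_sign C e ^+ 2 / r e = (effR tl hd r C)^-1.
Proof.
rewrite /effR invrK [RHS]big_mkcond; apply: eq_bigr => e _; rewrite /cut_sign inE.
by case: (tl e \in C); case: (hd e \in C); rewrite /= ?subrr ?subr0 ?sub0r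
  ?sqrrN ?expr1n ?expr0n ?mul0r ?mul1r.
Qed.

Lemma Bfun_shift f x (C : {set 'I_n}) a : is_bflow tl hd b f ->
  Bfun tl hd r b (x + a *: indic_col C) = Bfun tl hd r b x
    + a * \sum_e cut_sign C e * ohm_gap f x e - 2^-1 * a ^+ 2 * (effR tl hd r C)^-1.
Proof.
move=> f_flow; rewrite !(Bfun_gapE _ f_flow) -sum_cut_sign_sqr.
have -> : \sum_e r e * ohm_gap f (x + a *: indic_col C) e ^+ 2 =
    \sum_e r e * ohm_gap f x e ^+ 2 - 2 * a * \sum_e cut_sign C e * ohm_gap f x e
    + a ^+ 2 * \sum_e cut_sign C e ^+ 2 / r e.
  rewrite !mulr_sumr -sumrB -big_split /=; apply: eq_bigr => e _.
  by rewrite /ohm_gap potdiff_shift; field.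
by field.
Qed.

Lemma cut_gap_bound f x Bmax (C : {set 'I_n}) : is_bflow tl hd b f ->
  (forall y, Bfun tl hd r b y <= Bmax) -> 0 < (effR tl hd r C)^-1 ->
  (\sum_e cut_sign C e * ohm_gap f x e) ^+ 2
    <= 2 * (effR tl hd r C)^-1 * (Bmax - Bfun tl hd r b x).
Proof.
move=> f_flow Bmax_ub S_gt0; apply: sqr_le_quadratic_ub => // a.
by rewrite lerBrDl addrA -(Bfun_shift _ _ _ f_flow).
Qed.

End Duality.

Arguments cut_sign {R n E} tl hd C e.

Section Tree.
Variables (R : realType) (n : nat) (E : finType) (tl hd : E -> 'I_n).
Variables (r : E -> R) (b : 'cV[R]_n) (T : {set E}).
Hypothesis r_gt0 : forall e, 0 < r e.
Hypothesis T_tree : spanning_tree tl hd T.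

Lemma compC_tl e : tl e \in compC tl hd T e.
Proof. by rewrite inE connect0. Qed.

Lemma compC_hd e : e \in T -> hd e \notin compC tl hd T e.
Proof. by rewrite inE; case: T_tree => _; apply. Qed.

Lemma cut_sign_compC e e' : e \in T -> e' \in T ->
  cut_sign tl hd (compC tl hd T e) e' = (e' == e)%:R :> R.
Proof.
move=> eT e'T; have [-> | e'_neq_e] := eqVneq e' e.
  by rewrite /cut_sign compC_tl (negbTE (compC_hd eT)) subr0.
have adj_tl_hd : adjS tl hd (T :\ e) (tl e') (hd e').
  by apply/existsP; exists e'; rewrite !inE e'_neq_e e'T !eqxx.
have adj_hd_tl : adjS tl hd (T :\ e) (hd e') (tl e').
  by apply/existsP; exists e'; rewrite !inE e'_neq_e e'T !eqxx orbT.
rewrite /cut_sign.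
suff -> : (tl e' \in compC tl hd T e) = (hd e' \in compC tl hd T e) by rewrite subrr.
by rewrite !inE; apply/idP/idP => /connect_trans; apply; apply: connect1.
Qed.

Lemma inv_r_le_inv_effR_compC e : e \in T ->
  (r e)^-1 <= (effR tl hd r (compC tl hd T e))^-1.
Proof.
move=> eT; rewrite /effR invrK (bigD1 e) /=; last first.
  by rewrite inE compC_tl (negbTE (compC_hd eT)).
by rewrite lerDl sumr_ge0 // => e' _; rewrite invr_ge0 ltW.
Qed.

Lemma tau_ge_card : #|T|%:R <= tau tl hd r T.
Proof.
rewrite /tau -sum1_card natr_sum; apply: ler_sum => e eT.
rewrite -(@divff _ (r e)) ?lt0r_neq0 // ler_pM2l //.
exact: inv_r_le_inv_effR_compC.
Qed.

Lemma ohm_gap_tree_flow f x e : is_tree_flow tl hd r b T x f -> e \notin T ->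
  ohm_gap tl hd r f x e = 0.
Proof. by move=> [_ f_off] /f_off f_e; rewrite /ohm_gap f_e subrr. Qed.

Lemma tree_edge_gap_bound f x Bmax e : is_tree_flow tl hd r b T x f ->
  (forall y, Bfun tl hd r b y <= Bmax) -> e \in T ->
  ohm_gap tl hd r f x e ^+ 2
    <= 2 * (effR tl hd r (compC tl hd T e))^-1 * (Bmax - Bfun tl hd r b x).
Proof.
move=> f_tree Bmax_ub eT.
have <- : \sum_e' cut_sign tl hd (compC tl hd T e) e' * ohm_gap tl hd r f x e'
    = ohm_gap tl hd r f x e.
  rewrite (bigD1 e) //= cut_sign_compC // eqxx mul1r big1 ?addr0 // => e' e'_neq_e.
  have [e'T | e'_notin_T] := boolP (e' \in T).
    by rewrite cut_sign_compC // (negbTE e'_neq_e) mul0r.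
  by rewrite (ohm_gap_tree_flow f_tree) ?mulr0.
apply: cut_gap_bound => //; first exact: f_tree.1.
by apply: lt_le_trans (inv_r_le_inv_effR_compC eT); rewrite invr_gt0.
Qed.

Lemma tree_flow_energy_le f x Bmax : is_tree_flow tl hd r b T x f ->
  (forall y, Bfun tl hd r b y <= Bmax) ->
  energy r f <= Bfun tl hd r b x + tau tl hd r T * (Bmax - Bfun tl hd r b x).
Proof.
move=> f_tree Bmax_ub; set D := Bmax - _.
rewrite -lerBlDl (Bfun_gapE r_gt0 _ f_tree.1) opprB addrC subrK.
rewrite (bigID (mem T)) /= [X in _ + X]big1 ?addr0; last first.
  by move=> e /(ohm_gap_tree_flow f_tree) ->; rewrite expr0n mulr0.
rewrite /tau mulr_sumr mulr_suml; apply: ler_sum => e eT.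
have := ler_wpM2l (ltW (r_gt0 e)) (tree_edge_gap_bound f_tree Bmax_ub eT).
set S := (effR _ _ _ _)^-1; set g2 := _ ^+ 2; rewrite /D.
nra.
Qed.

End Tree.

Lemma connect_adjS0 (n : nat) (E : finType) (tl hd : E -> 'I_n) (u v : 'I_n) :
  connect (adjS tl hd finset.set0) u v -> u = v.
Proof. by case/connectP => -[_ -> // | z p /= /andP[/existsP[e]]]; rewrite inE. Qed.

Lemma measurable_Bfun (R : realType) (n : nat) (E : finType) (tl hd : E -> 'I_n)
    (r : E -> R) (b : 'cV[R]_n) (d : measure_display) (Omega : measurableType d)
    (X : Omega -> 'cV[R]_n) :
  (forall i, measurable_fun setT (fun w => X w i 0)) ->
  measurable_fun setT (fun w => Bfun tl hd r b (X w)).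
Proof.
move=> X_meas; under eq_fun do rewrite BfunE.
have potdiff_meas e : measurable_fun setT (fun w => potdiff tl hd (X w) e).
  exact: measurable_funB.
apply: measurable_funB.
  by apply: measurable_sum => v; apply: measurable_funM.
apply: measurable_funM => //; apply: measurable_sum => e.
by apply: measurable_funM => //; apply: measurable_funX.
Qed.

Section Expectation.
Local Open Scope ereal_scope.
Variables (d : measure_display) (Omega : measurableType d) (R : realType).

(* No measurability is needed, as the integral of a nonnegative function is a
   supremum over the simple functions below it; the energy of F (X w) is not
   known to be measurable. *)
Lemma ge0_le_integral_nonmeas (mu : {measure set Omega -> \bar R})
    (f1 f2 : Omega -> \bar R) :
  (forall w, 0 <= f1 w) -> (forall w, f1 w <= f2 w) ->
  \int[mu]_w f1 w <= \int[mu]_w f2 w.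
Proof.
move=> f1_ge0 f12; have f2_ge0 w : 0 <= f2 w by exact: le_trans (f12 w).
rewrite !ge0_integralTE //; apply: ereal_sup_le => _ /= [h h_le <-].
by exists h => //= w; exact: le_trans (h_le w) (f12 w).
Qed.

Variable P : probability Omega R.

Let integral_cst_prob (k : R) : \int[P]_w k%:E = k%:E.
Proof. by rewrite integral_cst //= probability_setT mule1. Qed.

Lemma integrable_bounded_above (g : Omega -> R) (M K : R) :
  measurable_fun setT g -> (forall w, (g w <= M)%R) ->
  K%:E <= \int[P]_w (g w)%:E -> P.-integrable setT (EFin \o g).
Proof.
move=> g_meas g_ub K_le.
have gE_meas : measurable_fun setT (EFin \o g) by exact/measurable_EFinP.
have pos_lt : \int[P]_w (EFin \o g)^\+ w < +oo.
  apply: le_lt_trans (_ : \int[P]_w (Num.max M 0%R)%:E < _); last first.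
    by rewrite integral_cst_prob ltry.
  apply: ge0_le_integral => //; first exact: measurable_funepos.
  move=> w _; rewrite funeposE /= ge_max.
  by rewrite !lee_fin !le_max g_ub lexx orbT.
have neg_lt : \int[P]_w (EFin \o g)^\- w < +oo.
  rewrite ltNge leye_eq; apply/negP => /eqP neg_oo; move: K_le.
  by rewrite integralE neg_oo addeNy ?leeNy_eq // ge0_fin_numE ?integral_ge0.
apply/integrableP; split => //.
have -> : (fun w => `|(EFin \o g) w|) = (EFin \o g)^\+ \+ (EFin \o g)^\-.
  by rewrite -fune_abse.
rewrite ge0_integralD //.
- exact: lte_add_pinfty.
- exact: measurable_funepos.
- exact: measurable_funeneg.
Qed.

Lemma expectation_affine_bound (g h : Omega -> R) (M t eps : R) :
  measurable_fun setT g -> (forall w, (g w <= M)%R) -> (1 <= t)%R ->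
  (forall w, (0 <= h w)%R) -> (forall w, (h w <= g w + t * (M - g w))%R) ->
  ((1 - eps / t) * M)%:E <= \int[P]_w (g w)%:E ->
  \int[P]_w (h w)%:E <= ((1 + eps) * M)%:E.
Proof.
move=> g_meas g_ub t_ge1 h_ge0 h_le g_int_ge.
have g_int := integrable_bounded_above g_meas g_ub g_int_ge.
set Ig := fine (\int[P]_w (g w)%:E).
have g_intE : \int[P]_w (g w)%:E = Ig%:E.
  by rewrite fineK //; exact: integrable_fin_num g_int.
have Ig_le : (Ig <= M)%R.
  rewrite -lee_fin -g_intE -[leRHS]integral_cst_prob.
  apply: le_integral => //; first exact: finite_measure_integrable_cst.
  by move=> w _; rewrite lee_fin g_ub.
apply: le_trans (_ : \int[P]_w ((t * M)%:E - (t - 1)%:E * (g w)%:E) <= _).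
  apply: ge0_le_integral_nonmeas => w; first by rewrite lee_fin.
  have affineE : (t * M - (t - 1) * g w = g w + t * (M - g w))%R by ring.
  by rewrite -EFinM -EFinB lee_fin affineE.
rewrite integralB //; last 2 first.
- exact: finite_measure_integrable_cst.
- exact: integrableZl.
rewrite integral_cst_prob integralZl // g_intE -EFinM -EFinB lee_fin.
move: g_int_ge; rewrite g_intE lee_fin.
have t_gt0 : (0 < t)%R by lra.
set q := (eps / t)%R => Ig_ge.
have -> : eps = (q * t)%R by rewrite /q divfK // gt_eqF.
(* (1 - q) M <= Ig <= M forces q M >= 0. *)
have qM_ge0 : (0 <= q * M)%R by nra.
nra.
Qed.

End Expectation.

Theorem mainTheorem16 (R : realType) (n : nat) (E : finType) (tl hd : E -> 'I_n)
    (r : E -> R) (b : 'cV[R]_n) (T : {set E})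
    (fstar : E -> R) (xstar : 'cV[R]_n)
    (d : measure_display) (Omega : measurableType d) (P : probability Omega R)
    (X : Omega -> 'cV[R]_n) (F : 'cV[R]_n -> E -> R) (eps : R) :
  (forall e, tl e != hd e) ->
  (forall e, 0 < r e) ->
  connected_graph tl hd ->
  \sum_(v < n) b v 0 = 0 ->
  (* f* is the minimum-energy b-flow *)
  is_bflow tl hd b fstar ->
  (forall f, is_bflow tl hd b f -> energy r fstar <= energy r f) ->
  (* x* maximizes B *)
  (forall x, Bfun tl hd r b x <= Bfun tl hd r b xstar) ->
  spanning_tree tl hd T ->
  (* F x is the tree-defined flow f_{T,x} *)
  (forall x, is_tree_flow tl hd r b T x (F x)) ->
  (* X is a random vector (each coordinate measurable) *)
  (forall i : 'I_n, measurable_fun setT (fun w => X w i 0)) ->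
  (\int[P]_w (Bfun tl hd r b (X w))%:E >=
     ((1 - eps / tau tl hd r T) * Bfun tl hd r b xstar)%:E)%E ->
  (\int[P]_w (energy r (F (X w)))%:E <= ((1 + eps) * energy r fstar)%:E)%E.
Proof.
move=> loopless r_gt0 _ _ fstar_flow fstar_min xstar_max T_tree F_tree X_meas.
move=> B_int_ge.
have tree_bound x := tree_flow_energy_le r_gt0 T_tree (F_tree x) xstar_max.
have fstar_xstar : energy r fstar = Bfun tl hd r b xstar.
  apply/le_anti/andP; split; last exact: Bfun_le_energy.
  apply: le_trans (fstar_min _ (F_tree xstar).1) _.
  by apply: le_trans (tree_bound xstar) _; rewrite subrr mulr0 addr0.
have [T0 | /set0Pn[e eT]] := eqVneq T finset.set0.
  have no_edge (e : E) : False.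
    case: T_tree => /(_ (tl e) (hd e)); rewrite T0 => /connect_adjS0 tl_hd _.
    by move: (loopless e); rewrite tl_hd eqxx.
  have energy0 f : energy r f = 0.
    by rewrite /energy big1 ?mulr0 // => e _; case: (no_edge e).
  by under eq_integral do rewrite energy0; rewrite integral0 energy0 mulr0.
rewrite fstar_xstar; apply: expectation_affine_bound B_int_ge.
- exact: measurable_Bfun.
- by move=> w; exact: xstar_max.
- apply: le_trans (tau_ge_card r_gt0 T_tree).
  by rewrite ler1n card_gt0; apply/set0Pn; exists e.
- by move=> w; exact: energy_ge0.
- by move=> w; exact: tree_bound.
Qed.
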